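(* The admissible locus is independent of the choice of basis: if $\chi:\mathbb{Z}_{p^\ell}\to\mathbb{C}_p^\times$ is a continuous nontrivial character with $\mathrm{val}_q(\chi(x)-1)>0$ for all $x$, and for a $\mathbb{Z}_p$-basis $\mathbf c=(c_1,\dots,c_\ell)$ of $\mathbb{Z}_{p^\ell}$ with dual basis $c_1^*,\dots,c_\ell^*$ one puts $t_{j}^{\mathbf c}=\chi(c_j^* )-1$, then whether $$\mathrm{val}_q\big(\mathfrak{S}_{\mathbf c}(t_1^{\mathbf c},\dots,t_\ell^{\mathbf c})\big)=\ell\cdot\min_j\mathrm{val}_q(t_j^{\mathbf c})$$ holds does not depend on $\mathbf c$.
   Context: $p$ prime, $q=p^a$ with $\ell\mid a$; $\mathbb{Z}_{p^\ell}$ is the unramified extension of $\mathbb{Z}_p$ of degree $\ell$, $\mathbb{Q}_{p^\ell}$ its fraction field, $\sigma$ the arithmetic Frobenius. For a $\mathbb{Z}_p$-basis $\mathbf c$ of $\mathbb{Z}_{p^\ell}$, the dual basis $c_1^*,\dots,c_\ell^*\in\mathbb{Z}_{p^\ell}$ satisfies $\mathrm{Tr}_{\mathbb{Q}_{p^\ell}/\mathbb{Q}_p}(c_i^*c_j)=\delta_{ij}$, and $\mathfrak{S}_{\mathbf c}(\underline T)=\prod_{i=1}^\ell\big(\sum_{j=1}^\ell\sigma^i(c_j)T_j\big)$. $\mathrm{val}_q$ is the valuation on $\mathbb{C}_p$ with $\mathrm{val}_q(q)=1$. The point $(t_j^{\mathbf c})_j$ is the coordinate of $\chi$ in the weight space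 (open unit polydisk) $\mathcal{W}$ determined by $\mathbf c$; the admissible locus $\mathcal{W}^{\mathrm{adm}}$ is the set of points $\underline t\neq\underline 0$ with $\mathrm{val}_q(\mathfrak{S}_{\mathbf c}(\underline t))=\ell\min_j\mathrm{val}_q(t_j)$. *)

From HB Require Import structures.
From mathcomp Require Import all_boot all_order all_algebra.
From mathcomp Require Import reals constructive_ereal.
Set Implicit Arguments. Unset Strict Implicit. Unset Printing Implicit Defensive.
Import Order.TTheory GRing.Theory Num.Theory.
Local Open Scope ring_scope.

Definition is_valuation (R : realType) (K : fieldType) (v : K -> \bar R) : Prop :=
  [/\ forall x, v x = +oo%E <-> x = 0,
      forall x y, v (x * y) = (v x + v y)%E &
      forall x y, (Order.min (v x) (v y) <= v (x + y)%R)%E ].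

Definition val_complete (R : realType) (K : fieldType) (v : K -> \bar R) : Prop :=
  forall u : nat -> K,
    (forall M : R, exists N : nat, forall m n, (N <= m)%N -> (N <= n)%N ->
        (M%:E <= v (u m - u n)%R)%E) ->
    exists L : K, forall M : R, exists N : nat, forall n, (N <= n)%N ->
        (M%:E <= v (u n - L)%R)%E.

(* Z_p inside K: the closure of Z, i.e. x is congruent to an integer mod p^n for all n. *)
Definition is_Zp (R : realType) (K : fieldType) (v : K -> \bar R) (p : nat) (x : K) : Prop :=
  forall n : nat, exists m : int, (v ((p%:R : K) ^+ n)%R <= v (x - m%:~R)%R)%E.

(* Z_{p^l} inside K: Z_p[zeta] = { sum_{k<l} a_k zeta^k : a_k in Z_p },
   zeta a primitive (p^l - 1)-th root of unity. *)
Definition is_Zpl (R : realType) (K : fieldType) (v : K -> \bar R) (p l : nat) (zeta : K)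
  (x : K) : Prop :=
  exists a : 'I_l -> K, (forall k, is_Zp v p (a k)) /\ x = \sum_(k < l) a k * zeta ^+ k.

(* The element sigma^i (sum_k a_k zeta^k) = sum_k a_k zeta^(k p^i), where sigma is the
   arithmetic Frobenius (zeta |-> zeta^p). Elements of Z_{p^l} are given by their
   coefficient vectors a : 'I_l -> K (entries in Z_p). *)
Definition frob_emb (K : fieldType) (p l : nat) (zeta : K) (i : nat) (a : 'I_l -> K) : K :=
  \sum_(k < l) a k * zeta ^+ (k * p ^ i).

Definition is_Zp_basis (R : realType) (K : fieldType) (v : K -> \bar R) (p l : nat) (zeta : K)
  (c : 'I_l -> 'I_l -> K) : Prop :=
  (forall j k, is_Zp v p (c j k)) /\
  forall x, is_Zpl v p l zeta x ->
    exists! b : 'I_l -> K, (forall j, is_Zp v p (b j)) /\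
      x = \sum_(j < l) b j * frob_emb p zeta 0 (c j).

(* cs is the dual basis of c: Tr(cs_i c_j) = delta_ij, Tr = sum_{i<l} sigma^i. *)
Definition is_dual_basis (R : realType) (K : fieldType) (v : K -> \bar R) (p l : nat) (zeta : K)
  (c cs : 'I_l -> 'I_l -> K) : Prop :=
  (forall j k, is_Zp v p (cs j k)) /\
  forall a b : 'I_l,
    \sum_(i < l) frob_emb p zeta i (cs a) * frob_emb p zeta i (c b) = (a == b)%:R.

Definition good_character (R : realType) (K : fieldType) (v : K -> \bar R) (p l : nat) (zeta : K)
  (chi : K -> K) : Prop :=
  [/\ forall x y, is_Zpl v p l zeta x -> is_Zpl v p l zeta y -> chi (x + y) = chi x * chi y,
      forall x, is_Zpl v p l zeta x -> chi x != 0,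
      forall x, is_Zpl v p l zeta x -> forall M : R, exists N : R, forall y,
          is_Zpl v p l zeta y -> (N%:E <= v (y - x)%R)%E -> (M%:E <= v (chi y - chi x)%R)%E,
      (exists2 x, is_Zpl v p l zeta x & chi x != 1) &
      forall x, is_Zpl v p l zeta x -> (0 < v (chi x - 1)%R)%E ].

Definition t_coord (K : fieldType) (p l : nat) (zeta : K) (chi : K -> K)
  (cs : 'I_l -> 'I_l -> K) (j : 'I_l) : K :=
  chi (frob_emb p zeta 0 (cs j)) - 1.

Definition frakS (K : fieldType) (p l : nat) (zeta : K) (c : 'I_l -> 'I_l -> K)
  (T : 'I_l -> K) : K :=
  \prod_(i < l) \sum_(j < l) frob_emb p zeta i.+1 (c j) * T j.

Definition adm_eq (R : realType) (K : fieldType) (v : K -> \bar R) (p l : nat) (zeta : K)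
  (c : 'I_l -> 'I_l -> K) (t : 'I_l -> K) : Prop :=
  v (frakS p zeta c t) = ((l%:R : R)%:E * \big[Order.min/+oo%E]_(j < l) v (t j))%E.

From HB Require Import structures.
From mathcomp Require Import all_boot all_order all_algebra.
From mathcomp Require Import reals constructive_ereal.
From mathcomp Require Import ring lra.
Import Order.TTheory GRing.Theory Num.Theory.
Local Open Scope ring_scope.
Set Implicit Arguments. Unset Strict Implicit. Unset Printing Implicit Defensive.

(* Fix a reference basis c with dual basis c*, put u_k = chi(c_k) - 1 and r = min_k val u_k > 0.
   Because chi is a homomorphism with values close to 1, it is linear up to order 2r on
   Z_p-combinations: chi(sum_k b_k x_k) - 1 = sum_k b_k (chi(x_k) - 1) mod valuation 2r
   (approximate b_k by natural numbers and use continuity of chi at 0).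
   For any basis d with dual basis d*, write d*_j = sum_k beta_jk c_k with beta_jk in Z_p;
   then t^d_j = sum_k beta_jk u_k mod 2r.  Since dual bases transform contragrediently,
   the linear factor sum_j sigma^i(d_j) t^d_j of S_d(t^d) is congruent mod 2r to
   Lambda_i = sum_k sigma^i(c*_k) u_k, which does not depend on d.  As the u_k are recovered
   from the Lambda_i by the invertible matrix (sigma^i(c_k)), min_j val t^d_j = r as well, and
   S_d(t^d) = prod_i Lambda_i mod valuation l r + r, so whether val S_d(t^d) = l r does not
   depend on d.  (If all u_k vanish, then so do all t^d_j and the equation holds for every d.) *)

Section Valuation.
Variables (R : realType) (K : fieldType) (v : K -> \bar R).
Hypothesis Hv : is_valuation v.

Definition vge (x : K) (s : R) := (s%:E <= v x)%E.
Definition vgt (x : K) (s : R) := (s%:E < v x)%E.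

Lemma val0 : v 0 = +oo%E.
Proof. by case: Hv => H _ _; apply: (H 0).2. Qed.

Lemma val_eqy x : v x = +oo%E -> x = 0.
Proof. by case: Hv => H _ _; apply: (H x).1. Qed.

Lemma valM x y : v (x * y) = (v x + v y)%E.
Proof. by case: Hv. Qed.

Lemma val_ge_min x y : (Order.min (v x) (v y) <= v (x + y))%E.
Proof. by case: Hv. Qed.

Lemma val_neqNy x : v x != -oo%E.
Proof. by apply/eqP => E; have := valM 0 x; rewrite mul0r val0 E. Qed.

Lemma val_fin x : x != 0 -> exists r, v x = r%:E.
Proof.
move=> x0; have := val_neqNy x; case E: (v x) => [r| |] // _; first by exists r.
by move/val_eqy/eqP: E; rewrite (negbTE x0).
Qed.

Lemma val1 : v 1 = 0%E.
Proof.
have [r r1] := val_fin (oner_neq0 K).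
by move: (valM 1 1); rewrite mulr1 r1 -EFinD => -[e]; congr (_%:E); lra.
Qed.

Lemma valN x : v (- x) = v x.
Proof.
have [r rN1] : exists r, v (-1) = r%:E by apply: val_fin; rewrite oppr_eq0 oner_eq0.
have vN1 : v (-1) = 0%E.
  by move: (valM (-1) (-1)); rewrite mulrNN mulr1 val1 rN1 -EFinD => -[e]; congr (_%:E); lra.
by rewrite -mulN1r valM vN1 add0e.
Qed.

Lemma valX x s n : v x = s%:E -> v (x ^+ n) = (n%:R * s)%:E.
Proof.
move=> h; elim: n => [|n IH]; first by rewrite expr0 val1 mul0r.
by rewrite exprS valM IH h -EFinD -natr1 mulrDl mul1r addrC.
Qed.

Lemma val_unity_root x N : (0 < N)%N -> x ^+ N = 1 -> v x = 0%E.
Proof.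
move=> N0 xN; have x0 : x != 0.
  by apply: contra_eq_neq xN => ->; rewrite expr0n gtn_eqF // eq_sym oner_neq0.
have [s E] := val_fin x0; move: (valX N E); rewrite xN val1 E => -[] /esym /eqP.
by rewrite mulf_eq0 pnatr_eq0 gtn_eqF //= => /eqP ->.
Qed.

Lemma vge0 s : vge 0 s.
Proof. by rewrite /vge val0 leey. Qed.

Lemma vge1 : vge 1 0.
Proof. by rewrite /vge val1. Qed.

Lemma vge_le x s s' : s' <= s -> vge x s -> vge x s'.
Proof. by move=> h; apply: le_trans; rewrite lee_fin. Qed.

Lemma vgeD x y s : vge x s -> vge y s -> vge (x + y) s.
Proof. by move=> hx hy; apply: le_trans (val_ge_min x y); rewrite le_min; apply/andP. Qed.

Lemma vgeN x s : vge x s -> vge (- x) s.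
Proof. by rewrite /vge valN. Qed.

Lemma vgeB x y s : vge x s -> vge y s -> vge (x - y) s.
Proof. by move=> hx /vgeN; apply: vgeD. Qed.

Lemma vgeM x y s1 s2 : vge x s1 -> vge y s2 -> vge (x * y) (s1 + s2).
Proof. by move=> hx hy; rewrite /vge valM EFinD; apply: leeD. Qed.

Lemma vgeM0l x y s : vge x 0 -> vge y s -> vge (x * y) s.
Proof. by move=> hx hy; rewrite -[s]add0r; apply: vgeM. Qed.

Lemma vgeM0r x y s : vge x s -> vge y 0 -> vge (x * y) s.
Proof. by move=> hx hy; rewrite -[s]addr0; apply: vgeM. Qed.

Lemma vgeX x n : vge x 0 -> vge (x ^+ n) 0.
Proof. by move=> h; elim: n => [|n IH]; rewrite ?expr0 ?exprS; [exact: vge1 | exact: vgeM0l]. Qed.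

Lemma vge_sum (I : Type) (r : seq I) (P : pred I) (F : I -> K) s :
  (forall i, P i -> vge (F i) s) -> vge (\sum_(i <- r | P i) F i) s.
Proof. by move=> h; apply: (big_ind (vge^~ s)) => //; [exact: vge0 | move=> x y; exact: vgeD]. Qed.

Lemma vge_prod n (F : 'I_n -> K) s :
  (forall i, vge (F i) s) -> vge (\prod_(i < n) F i) (n%:R * s).
Proof.
elim: n F => [|n IH] F h; first by rewrite big_ord0 mul0r; exact: vge1.
by rewrite big_ord_recr /= -natr1 mulrDl mul1r; apply: vgeM => //; apply: IH.
Qed.

Lemma vge_int (m : int) : vge m%:~R 0.
Proof.
have vge_nat n : vge n%:R 0.
  by elim: n => [|n IH]; [exact: vge0 | rewrite -natr1; apply: vgeD IH vge1].
by case: m => n; rewrite ?NegzE ?mulrNz; [|apply: vgeN]; rewrite -pmulrn.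
Qed.

Lemma vge_eq0 x : (forall s, vge x s) -> x = 0.
Proof.
move=> h; apply: val_eqy; have := h 0; rewrite /vge.
case E: (v x) => [r| |] // _.
by have := h (r + 1); rewrite /vge E lee_fin gerDl ler10.
Qed.

Lemma vgt_vge x s s' : s < s' -> vge x s' -> vgt x s.
Proof. by move=> h; apply: lt_le_trans; rewrite lte_fin. Qed.

Lemma vgtD x y s : vgt x s -> vgt y s -> vgt (x + y) s.
Proof. by move=> hx hy; apply: lt_le_trans (val_ge_min x y); rewrite lt_min; apply/andP. Qed.

Lemma vgtM0l x y s : vge x 0 -> vgt y s -> vgt (x * y) s.
Proof. by move=> hx hy; rewrite /vgt valM -[s%:E]add0e; apply: lee_ltD. Qed.

Lemma vgt_sum (I : Type) (r : seq I) (P : pred I) (F : I -> K) s :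
  (forall i, P i -> vgt (F i) s) -> vgt (\sum_(i <- r | P i) F i) s.
Proof.
by move=> h; apply: (big_ind (vgt^~ s)) => //; [rewrite /vgt val0 ltey | move=> x y; exact: vgtD].
Qed.

Lemma vge_prodB n (F G : 'I_n -> K) r : 0 <= r ->
  (forall i, vge (F i) r) -> (forall i, vge (G i) r) ->
  (forall i, vge (F i - G i) (r + r)) ->
  vge (\prod_(i < n) F i - \prod_(i < n) G i) (n%:R * r + r).
Proof.
move=> r0; elim: n F G => [|n IH] F G hF hG hFG.
  by rewrite !big_ord0 subrr; exact: vge0.
rewrite !big_ord_recr /=.
set PF := \prod_(i < n) _; set PG := \prod_(i < n) _.
have -> : PF * F ord_max - PG * G ord_max =
  (PF - PG) * F ord_max + PG * (F ord_max - G ord_max) by ring.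
have -> : n.+1%:R * r + r = (n%:R * r + r) + r by rewrite -natr1; ring.
apply: vgeD; first by apply: vgeM => //; apply: IH.
rewrite -addrA; apply: vgeM => //; exact: vge_prod.
Qed.

Lemma val_eq_iff_close x y s s' : s < s' -> vge x s -> vge y s -> vge (x - y) s' ->
  v x = s%:E <-> v y = s%:E.
Proof.
move=> ss; suff key x1 y1 : vge y1 s -> vge (x1 - y1) s' -> v x1 = s%:E -> v y1 = s%:E.
  move=> hx hy hxy; split; first exact: key.
  by apply: key => //; rewrite -opprB; apply: vgeN.
move=> hy hxy ex; apply/le_anti/andP; split=> //; rewrite leNgt; apply/negP => hgt.
suff : vgt x1 s by rewrite /vgt ex ltxx.
by rewrite -(subrK y1 x1) addrC; apply: vgtD hgt (vgt_vge ss hxy).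
Qed.

End Valuation.

Section IntegerRings.
Variables (R : realType) (K : fieldType) (v : K -> \bar R) (p l : nat) (zeta : K).
Hypothesis Hv : is_valuation v.
Local Notation Zp := (is_Zp v p).
Local Notation Zpl := (is_Zpl v p l zeta).

Lemma Zp_int (m : int) : Zp m%:~R.
Proof. by move=> n; exists m; rewrite subrr val0 // leey. Qed.

Lemma Zp_nat (m : nat) : Zp m%:R.
Proof. by rewrite pmulrn; apply: Zp_int. Qed.

Lemma Zp_add x y : Zp x -> Zp y -> Zp (x + y).
Proof.
move=> hx hy n; have [m1 h1] := hx n; have [m2 h2] := hy n.
exists (m1 + m2); rewrite intrD.
have -> : x + y - (m1%:~R + m2%:~R) = (x - m1%:~R) + (y - m2%:~R) by ring.
by apply: le_trans (val_ge_min Hv _ _); rewrite le_min h1 h2.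
Qed.

Lemma Zp_opp x : Zp x -> Zp (- x).
Proof. by move=> hx n; have [m h] := hx n; exists (- m); rewrite intrN -opprD valN. Qed.

Lemma Zp_vge0 x : Zp x -> vge v x 0.
Proof.
move=> hx; have [m h] := hx 0%N; rewrite expr0 val1 // in h.
by rewrite -(subrK m%:~R x); apply: vgeD (vge_int Hv m).
Qed.

Lemma Zp_mul x y : Zp x -> Zp y -> Zp (x * y).
Proof.
move=> hx hy n; have [m1 h1] := hx n; have [m2 h2] := hy n.
exists (m1 * m2); rewrite intrM.
have -> : x * y - m1%:~R * m2%:~R = x * (y - m2%:~R) + m2%:~R * (x - m1%:~R) by ring.
apply: le_trans (val_ge_min Hv _ _); rewrite le_min !valM //; apply/andP; split.
  by rewrite -[X in (X <= _)%E]add0e; apply: leeD => //; apply: Zp_vge0.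
by rewrite -[X in (X <= _)%E]add0e; apply: leeD => //; apply: vge_int.
Qed.

Lemma Zp_sum (I : Type) (r : seq I) (P : pred I) (F : I -> K) :
  (forall i, P i -> Zp (F i)) -> Zp (\sum_(i <- r | P i) F i).
Proof. by move=> h; apply: (big_ind Zp) => //; [exact: (Zp_nat 0) | exact: Zp_add]. Qed.

Lemma Zpl0 : Zpl 0.
Proof.
exists (fun=> 0); split=> [k|]; first exact: (Zp_nat 0).
by rewrite big1 // => k _; rewrite mul0r.
Qed.

Lemma ZplD x y : Zpl x -> Zpl y -> Zpl (x + y).
Proof.
move=> [a [ha ->]] [b [hb ->]]; exists (fun k => a k + b k); split.
  by move=> k; apply: Zp_add.
by rewrite -big_split /=; apply: eq_bigr => k _; rewrite mulrDl.
Qed.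

Lemma ZplZ b x : Zp b -> Zpl x -> Zpl (b * x).
Proof.
move=> hb [a [ha ->]]; exists (fun k => b * a k); split.
  by move=> k; apply: Zp_mul.
by rewrite mulr_sumr; apply: eq_bigr => k _; rewrite mulrA.
Qed.

Lemma Zpl_zeta_pow (n : 'I_l) : Zpl (zeta ^+ n).
Proof.
exists (fun k => (k == n)%:R); split; first by move=> k; apply: Zp_nat.
by rewrite (bigD1 n) //= eqxx mul1r big1 ?addr0 // => k /negbTE ->; rewrite mul0r.
Qed.

Lemma frob_emb0 (x : 'I_l -> K) : frob_emb p zeta 0 x = \sum_(k < l) x k * zeta ^+ k.
Proof. by apply: eq_bigr => k _; rewrite expn0 muln1. Qed.

Lemma Zpl_frob_emb0 (x : 'I_l -> K) : (forall k, Zp (x k)) -> Zpl (frob_emb p zeta 0 x).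
Proof. by move=> h; rewrite frob_emb0; exists x. Qed.

Hypothesis zeta_vge0 : vge v zeta 0.

Lemma frob_emb_vge0 i (x : 'I_l -> K) : (forall k, Zp (x k)) -> vge v (frob_emb p zeta i x) 0.
Proof. by move=> h; apply: (vge_sum Hv) => k _; apply: (vgeM0l Hv (Zp_vge0 _) (vgeX Hv _ _)). Qed.

Lemma Zpl_vge0 x : Zpl x -> vge v x 0.
Proof. by move=> [a [ha ->]]; rewrite -frob_emb0; apply: frob_emb_vge0. Qed.

End IntegerRings.

Section Character.
Variables (R : realType) (K : fieldType) (v : K -> \bar R) (p a l : nat) (zeta : K).
Variable chi : K -> K.
Hypotheses (Hv : is_valuation v) (p_prime : prime p) (val_pa : v (p%:R ^+ a) = 1%:E).
Hypothesis zeta_vge0 : vge v zeta 0.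
Hypothesis Hchi : good_character v p l zeta chi.
Local Notation Zp := (is_Zp v p).
Local Notation Zpl := (is_Zpl v p l zeta).

Lemma Zp_nat_approx b s : Zp b -> exists n : nat, vge v (b - n%:R) s.
Proof.
move=> hb; set k := Num.Def.archi_bound `|s|.
have sk : s <= k%:R by apply: le_trans (ltW (archi_boundP (normr_ge0 s))); apply: ler_norm.
have [m hm] := hb (a * k)%N; rewrite exprM (valX Hv k val_pa) mulr1 in hm.
have d_gt0 : (0 < p ^ (a * k))%N by rewrite expn_gt0 prime_gt0.
pose d : int := (p ^ (a * k))%N.
have en : (`|(m %% d)%Z|%N : int) = m - (m %/ d)%Z * d.
  by rewrite gez0_abs ?modz_ge0 ?eqz_nat -?lt0n // {2}(divz_eq m d); ring.
have pd : (p%:R : K) ^+ (a * k) = d%:~R by rewrite -natrX pmulrn.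
(* The residue of m modulo p^(ak) is a natural number congruent to b modulo p^(ak). *)
exists `|(m %% d)%Z|%N; apply: vge_le sk _.
have -> : b - `|(m %% d)%Z|%N%:R = (b - m%:~R) + (m %/ d)%Z%:~R * p%:R ^+ (a * k).
  by rewrite pmulrn en intrB intrM pd; ring.
apply: vgeD => //; apply: (vgeM0l Hv (vge_int Hv _)).
by rewrite /vge exprM (valX Hv k val_pa) mulr1.
Qed.

Lemma chiD x y : Zpl x -> Zpl y -> chi (x + y) = chi x * chi y.
Proof. by case: Hchi => H _ _ _ _; apply: H. Qed.

Lemma chi0 : chi 0 = 1.
Proof.
have nz : chi 0 != 0 by case: Hchi => _ H _ _ _; apply: H; apply: Zpl0.
by apply: (mulfI nz); rewrite -chiD ?addr0 ?mulr1 //; apply: Zpl0.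
Qed.

Lemma chiMn n y : Zpl y -> chi (n%:R * y) = chi y ^+ n.
Proof.
move=> hy; elim: n => [|n IH]; first by rewrite mul0r chi0 expr0.
by rewrite mulrS mulrDl mul1r chiD ?IH ?exprS //; apply/ZplZ/hy/Zp_nat.
Qed.

Lemma chi_near1 s : exists N : R, forall y, Zpl y -> vge v y N -> vge v (chi y - 1) s.
Proof.
have [N HN] : exists N : R, forall y, Zpl y -> (N%:E <= v (y - 0))%E ->
    (s%:E <= v (chi y - chi 0))%E.
  by case: Hchi => _ _ H _ _; apply: H; apply: Zpl0.
by exists N => y hy hyN; rewrite -chi0; apply: HN; rewrite ?subr0.
Qed.

Lemma expr1D_approx t r n : 0 <= r -> vge v t r ->
  vge v ((1 + t) ^+ n - 1) r /\ vge v ((1 + t) ^+ n - 1 - n%:R * t) (r + r).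
Proof.
move=> r0 ht; have h1t : vge v (1 + t) 0 by apply: vgeD (vge1 Hv) (vge_le r0 ht).
elim: n => [|n [IH1 IH2]].
  by rewrite expr0 subrr mul0r subr0; split; apply: vge0.
have -> : (1 + t) ^+ n.+1 - 1 - n.+1%:R * t =
    ((1 + t) ^+ n - 1 - n%:R * t) + t * ((1 + t) ^+ n - 1) by rewrite exprS mulrS; ring.
have -> : (1 + t) ^+ n.+1 - 1 = ((1 + t) ^+ n - 1) * (1 + t) + t by rewrite exprSr; ring.
by split; apply: vgeD => //; [apply: vgeM0r | apply: vgeM].
Qed.

(* Write b = n + e with n a natural number and e so small that chi(e y) = 1 mod 2r. *)
Lemma chi_scale_approx y b r : 0 <= r -> Zpl y -> Zp b -> vge v (chi y - 1) r ->
  vge v (chi (b * y) - 1 - b * (chi y - 1)) (r + r).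
Proof.
move=> r0 hy hb hr.
have [N HN] := chi_near1 (r + r).
have [n hn] := Zp_nat_approx (`|N| + r) hb.
have he : Zp (b - n%:R) by apply: Zp_add => //; apply/Zp_opp/Zp_nat.
have hY : vge v (chi ((b - n%:R) * y) - 1) (r + r).
  apply: HN; first exact: ZplZ.
  apply: vge_le (vgeM0r Hv hn (Zpl_vge0 Hv zeta_vge0 hy)).
  by have := ler_norm N; lra.
have [_ hE] := expr1D_approx n r0 hr.
have hny : Zpl (n%:R * y) by apply/ZplZ/hy/Zp_nat.
rewrite -{1}(subrK n%:R b) mulrDl chiD ?chiMn //; last exact: ZplZ.
move: hY hE; set t := chi y - 1; set Y := chi _ => hY hE.
have -> : chi y = 1 + t by rewrite /t; ring.
have -> : Y * (1 + t) ^+ n - 1 - b * t =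
   ((1 + t) ^+ n - 1 - n%:R * t) + (1 + t) ^+ n * (Y - 1) - (b - n%:R) * t by ring.
have h1t : vge v (1 + t) 0 by apply: vgeD (vge1 Hv) (vge_le r0 hr).
apply: (vgeB Hv); first exact: vgeD hE (vgeM0l Hv (vgeX Hv n h1t) hY).
by apply: vge_le (vgeM Hv hn hr); have := normr_ge0 N; lra.
Qed.

Lemma chi_lincomb_approx n (b y : 'I_n -> K) r : 0 <= r ->
  (forall k, Zp (b k)) -> (forall k, Zpl (y k)) -> (forall k, vge v (chi (y k) - 1) r) ->
  vge v (chi (\sum_(k < n) b k * y k) - 1 - \sum_(k < n) b k * (chi (y k) - 1)) (r + r).
Proof.
move=> r0 hb hy hr.
suff [] : [/\ Zpl (\sum_(k < n) b k * y k),
  vge v (chi (\sum_(k < n) b k * y k) - 1 - \sum_(k < n) b k * (chi (y k) - 1)) (r + r) &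
  vge v (\sum_(k < n) b k * (chi (y k) - 1)) r] by [].
apply: (big_ind2 (fun Y F => [/\ Zpl Y, vge v (chi Y - 1 - F) (r + r) & vge v F r])).
- by rewrite chi0 !subrr; split; [apply: Zpl0 | apply: vge0 | apply: vge0].
- move=> Y1 F1 Y2 F2 [z1 e1 f1] [z2 e2 f2].
  have g1 : vge v (chi Y1 - 1) r.
    by rewrite -(subrK F1 (chi Y1 - 1)); apply: (vgeD Hv (vge_le _ e1) f1); lra.
  have g2 : vge v (chi Y2 - 1) r.
    by rewrite -(subrK F2 (chi Y2 - 1)); apply: (vgeD Hv (vge_le _ e2) f2); lra.
  rewrite chiD //; split; [exact: ZplD | | exact: (vgeD Hv)].
  have -> : chi Y1 * chi Y2 - 1 - (F1 + F2) =
    (chi Y1 - 1 - F1) + (chi Y2 - 1 - F2) + (chi Y1 - 1) * (chi Y2 - 1) by ring.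
  by apply: (vgeD Hv _ (vgeM Hv g1 g2)); apply: (vgeD Hv).
- move=> k _; split; [exact: ZplZ | exact: chi_scale_approx |].
  exact: vgeM0l (Zp_vge0 Hv (hb k)) (hr k).
Qed.

End Character.

Lemma sum_ord_shift (V : nmodType) n (g : nat -> V) :
  g n = g 0%N -> \sum_(i < n) g i.+1 = \sum_(i < n) g i.
Proof.
case: n => [|n] gn; first by rewrite !big_ord0.
by rewrite big_ord_recr [RHS]big_ord_recl /= gn addrC.
Qed.

Section FrobeniusMatrices.
Variables (R : realType) (K : fieldType) (v : K -> \bar R) (p l : nat) (zeta : K).
Hypothesis Hv : is_valuation v.
Local Notation Zp := (is_Zp v p).
Local Notation Zpl := (is_Zpl v p l zeta).

Definition coef_mx (d : 'I_l -> 'I_l -> K) : 'M[K]_l := \matrix_(j, k) d j k.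

(* Entry (j, i) is sigma^(i+1)(d_j), the coefficient of T_j in the i-th linear factor of [frakS]. *)
Definition frob_mx (d : 'I_l -> 'I_l -> K) : 'M[K]_l :=
  \matrix_(j, i) frob_emb p zeta i.+1 (d j).

Lemma frob_emb_mx (d e : 'I_l -> 'I_l -> K) M i j : coef_mx e = M *m coef_mx d ->
  frob_emb p zeta i (e j) = \sum_(k < l) M j k * frob_emb p zeta i (d k).
Proof.
move=> eM; have ejn n : e j n = \sum_(k < l) M j k * d k n.
  have := congr1 (fun A : 'M_l => A j n) eM; rewrite /= !mxE => ->.
  by apply: eq_bigr => k _; rewrite mxE.
rewrite /frob_emb; under eq_bigr => n _ do rewrite ejn mulr_suml.
rewrite exchange_big; apply: eq_bigr => k _; rewrite mulr_sumr.
by apply: eq_bigr => n _; rewrite mulrA.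
Qed.

Lemma frob_mx_mul (d e : 'I_l -> 'I_l -> K) M : coef_mx e = M *m coef_mx d ->
  frob_mx e = M *m frob_mx d.
Proof.
move=> eM; apply/matrixP => j i; rewrite !mxE (frob_emb_mx i.+1 j eM).
by apply: eq_bigr => k _; rewrite mxE.
Qed.

Hypotheses (p_gt0 : (0 < p)%N) (zeta_period : zeta ^+ (p ^ l).-1 = 1).

Lemma frob_emb_period (x : 'I_l -> K) : frob_emb p zeta l x = frob_emb p zeta 0 x.
Proof.
apply: eq_bigr => n _; congr (_ * _); rewrite expn0 muln1 -[(p ^ l)%N]prednK ?expn_gt0 ?p_gt0 //.
by rewrite mulnS exprD [(n * _)%N]mulnC exprM zeta_period expr1n mulr1.
Qed.

Lemma dual_frob_mx (d ds : 'I_l -> 'I_l -> K) : is_dual_basis v p zeta d ds ->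
  frob_mx ds *m (frob_mx d)^T = 1%:M.
Proof.
move=> [_ hd]; apply/matrixP => j k; rewrite !mxE -hd.
under eq_bigr => i _ do rewrite !mxE.
by rewrite -(@sum_ord_shift _ l (fun i => frob_emb p zeta i (ds j) * frob_emb p zeta i (d k)))
  //= !frob_emb_period.
Qed.

Lemma Zp_basis_inverse (c : 'I_l -> 'I_l -> K) : is_Zp_basis v p zeta c ->
  exists B : 'M[K]_l, (forall n j, Zp (B n j)) /\ B *m coef_mx c = 1%:M.
Proof.
(* Row n of B holds the c-coordinates of zeta^n; uniqueness of coordinates gives [c B = 1]. *)
move=> [hc hcoord].
have /fin_all_exists [B hB] : forall n : 'I_l, exists b : 'I_l -> K, (forall j, Zp (b j)) /\
    zeta ^+ n = \sum_(j < l) b j * frob_emb p zeta 0 (c j).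
  by move=> n; have [b [hb _]] := hcoord _ (Zpl_zeta_pow p zeta Hv n); exists b.
exists (coef_mx B); split=> [n j|]; first by rewrite mxE; case: (hB n).
apply: mulmx1C; apply/matrixP => j i.
have [b0 [_ uniq_b0]] := hcoord _ (Zpl_frob_emb0 zeta (hc j)).
suff e : (fun k => (coef_mx c *m coef_mx B) j k) = (fun k => 1%:M j k).
  exact: (congr1 (@^~ i) e).
transitivity b0; [apply/esym/uniq_b0; split=> [k|] | apply/uniq_b0; split=> [k|]].
- rewrite mxE; apply: (Zp_sum Hv) => n _; rewrite !mxE.
  by apply: (Zp_mul Hv (hc j n)); case: (hB n).
- rewrite frob_emb0; under eq_bigr => n _ do rewrite (proj2 (hB n)) mulr_sumr.
  rewrite exchange_big; apply: eq_bigr => k _; rewrite mxE mulr_suml.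
  by apply: eq_bigr => n _; rewrite !mxE mulrA.
- by rewrite mxE; apply: Zp_nat.
- rewrite (bigD1 j) //= big1 ?addr0; first by rewrite mxE eqxx mul1r.
  by move=> k /negbTE jk; rewrite mxE eq_sym jk mul0r.
Qed.

End FrobeniusMatrices.

Definition frakS_factor (K : fieldType) (p l : nat) (zeta : K) (d : 'I_l -> 'I_l -> K)
  (T : 'I_l -> K) (i : 'I_l) : K :=
  \sum_(j < l) frob_emb p zeta i.+1 (d j) * T j.

Lemma frakSE (K : fieldType) (p l : nat) (zeta : K) d (T : 'I_l -> K) :
  frakS p zeta d T = \prod_(i < l) frakS_factor p zeta d T i.
Proof. by []. Qed.

Lemma frakS_factor_vge (R : realType) (K : fieldType) (v : K -> \bar R) (p l : nat) (zeta : K)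
  (d : 'I_l -> 'I_l -> K) (T : 'I_l -> K) r i :
  is_valuation v -> vge v zeta 0 -> (forall j k, is_Zp v p (d j k)) ->
  (forall j, vge v (T j) r) -> vge v (frakS_factor p zeta d T i) r.
Proof.
move=> Hv zeta_vge0 dZp hT; apply: (vge_sum Hv) => j _.
exact: (vgeM0l Hv (frob_emb_vge0 Hv zeta_vge0 _ (dZp j))).
Qed.

Lemma adm_eq_zero (R : realType) (K : fieldType) (v : K -> \bar R) (p l : nat) (zeta : K)
  (d : 'I_l -> 'I_l -> K) (t : 'I_l -> K) :
  is_valuation v -> (0 < l)%N -> (forall j, t j = 0) -> adm_eq v p zeta d t.
Proof.
move=> Hv l_gt0 t0; rewrite /adm_eq frakSE (bigD1 (Ordinal l_gt0)) //=.
rewrite [frakS_factor _ _ _ _ _]big1 => [|j _]; last by rewrite t0 mulr0.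
rewrite mul0r val0 // (@bigmin_eq_id _ _ _ _ +oo%E) => [|j _]; last by rewrite t0 val0.
by rewrite mulry gtr0_sg ?mul1e // ltr0n.
Qed.

Section Invariance.
Variables (R : realType) (K : fieldType) (v : K -> \bar R) (p a l : nat) (zeta : K).
Variable chi : K -> K.
Hypotheses (Hv : is_valuation v) (p_prime : prime p) (val_pa : v (p%:R ^+ a) = 1%:E).
Hypotheses (zeta_period : zeta ^+ (p ^ l).-1 = 1) (zeta_vge0 : vge v zeta 0).
Hypothesis Hchi : good_character v p l zeta chi.
Variables (c cs : 'I_l -> 'I_l -> K) (B : 'M[K]_l).
Hypotheses (hbc : is_Zp_basis v p zeta c) (hdc : is_dual_basis v p zeta c cs).
Hypotheses (B_Zp : forall n j, is_Zp v p (B n j)) (B_inv : B *m coef_mx c = 1%:M).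
Local Notation Zp := (is_Zp v p).
Local Notation t := (t_coord p zeta chi).
Local Notation u := (t_coord p zeta chi c).
Local Notation Lam := (frakS_factor p zeta cs u).

Lemma u_expand k : u k = \sum_(i < l) frob_emb p zeta i.+1 (c k) * Lam i.
Proof.
have /(congr1 (fun M : 'M_l => M^T)) := dual_frob_mx (prime_gt0 p_prime) zeta_period hdc.
rewrite trmx_mul trmxK trmx1 => /matrixP /(_ k) ckE.
have {}ckE k' : \sum_(i < l) frob_emb p zeta i.+1 (c k) * frob_emb p zeta i.+1 (cs k') =
    (k == k')%:R.
  by move: (ckE k'); rewrite !mxE => <-; apply: eq_bigr => i _; rewrite !mxE.
under eq_bigr => i _ do rewrite mulr_sumr.
rewrite exchange_big /=.
under eq_bigr => k' _ do (under eq_bigr => i _ do rewrite mulrA; rewrite -mulr_suml ckE).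
rewrite (bigD1 k) //= eqxx mul1r [X in _ + X]big1 ?addr0 // => k' k'k.
by rewrite eq_sym (negbTE k'k) mul0r.
Qed.

Section DualBasis.
Variables d ds : 'I_l -> 'I_l -> K.
Hypotheses (hbd : is_Zp_basis v p zeta d) (hdd : is_dual_basis v p zeta d ds).

(* The coordinates of the dual basis [ds] in the basis [c]. *)
Let beta := coef_mx ds *m B.

Lemma beta_Zp j k : Zp (beta j k).
Proof.
rewrite mxE; apply: (Zp_sum Hv) => n _; rewrite mxE.
by apply: (Zp_mul Hv); [case: hdd | apply: B_Zp].
Qed.

Lemma coef_mx_dual : coef_mx ds = beta *m coef_mx c.
Proof. by rewrite -mulmxA B_inv mulmx1. Qed.

Lemma frob_emb_dual_contra (i k : 'I_l) :
  \sum_(j < l) frob_emb p zeta i.+1 (d j) * beta j k = frob_emb p zeta i.+1 (cs k).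
Proof.
have p_gt0 := prime_gt0 p_prime.
have dds : (frob_mx p zeta d)^T *m frob_mx p zeta ds = 1%:M.
  exact/mulmx1C/(dual_frob_mx p_gt0 zeta_period hdd).
have ccs : frob_mx p zeta c *m (frob_mx p zeta cs)^T = 1%:M.
  by rewrite -[frob_mx p zeta c]trmxK -trmx_mul (dual_frob_mx p_gt0 zeta_period hdc) trmx1.
have : (frob_mx p zeta d)^T *m beta = (frob_mx p zeta cs)^T.
  rewrite -[LHS]mulmx1 -ccs mulmxA -(mulmxA _ beta) -(frob_mx_mul p zeta coef_mx_dual).
  by rewrite dds mul1mx.
move/matrixP/(_ i k); rewrite !mxE => <-.
by apply: eq_bigr => j _; rewrite !mxE.
Qed.

Variable r : R.
Hypotheses (r_ge0 : 0 <= r) (u_vge : forall k, vge v (u k) r).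

Lemma t_coord_approx j : vge v (t ds j - \sum_(k < l) beta j k * u k) (r + r).
Proof.
rewrite /t_coord (frob_emb_mx p zeta 0 j coef_mx_dual).
apply: (chi_lincomb_approx Hv p_prime val_pa zeta_vge0 Hchi) => // k.
- exact: beta_Zp.
- by apply: Zpl_frob_emb0; case: hbc.
Qed.

Lemma t_coord_vge j : vge v (t ds j) r.
Proof.
rewrite -(subrK (\sum_(k < l) beta j k * u k) (t ds j)).
apply: (vgeD Hv); first by apply: vge_le (t_coord_approx j); rewrite lerDl.
by apply: (vge_sum Hv) => k _; apply: (vgeM0l Hv (Zp_vge0 Hv (beta_Zp j k))).
Qed.

Lemma frakS_factor_approx i :
  vge v (frakS_factor p zeta d (t ds) i - Lam i) (r + r).
Proof.
have -> : Lam i = \sum_(j < l) frob_emb p zeta i.+1 (d j) * \sum_(k < l) beta j k * u k.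
  rewrite /frakS_factor; under eq_bigr => k _ do rewrite -frob_emb_dual_contra mulr_suml.
  rewrite exchange_big; apply: eq_bigr => j _; rewrite mulr_sumr.
  by apply: eq_bigr => k _; rewrite mulrA.
rewrite /frakS_factor -sumrB; apply: (vge_sum Hv) => j _; rewrite -mulrBr.
apply: (vgeM0l Hv _ (t_coord_approx j)).
by apply: (frob_emb_vge0 Hv zeta_vge0); case: hbd.
Qed.

End DualBasis.

(* If all t^d_j exceeded r, then so would every linear form, and hence every u_k. *)
Lemma bigmin_t_coord (d ds : 'I_l -> 'I_l -> K) r k0 :
  is_Zp_basis v p zeta d -> is_dual_basis v p zeta d ds ->
  0 < r -> (forall k, vge v (u k) r) -> v (u k0) = r%:E ->
  \big[Order.min/+oo%E]_(j < l) v (t ds j) = r%:E.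
Proof.
move=> hbd hdd r_gt0 u_vge u_k0; have r_ge0 := ltW r_gt0.
have r_lt_2r : r < r + r by rewrite ltrDl.
apply/le_anti/andP; split; last first.
  by apply: le_bigmin => [|j _]; [exact: leey | exact: (t_coord_vge hdd r_ge0 u_vge)].
rewrite leNgt; apply/negP => /bigmin_gtP [_ t_gt].
suff : vgt v (u k0) r by rewrite /vgt u_k0 ltxx.
rewrite u_expand; apply: (vgt_sum Hv) => i _.
apply: (vgtM0l Hv); first by apply: (frob_emb_vge0 Hv zeta_vge0); case: hbc.
rewrite -[Lam i](subrK (frakS_factor p zeta d (t ds) i)) -opprB addrC.
apply: (vgtD Hv); last first.
  by apply: (vgt_vge (r_lt_2r) (vgeN Hv (frakS_factor_approx hbd hdd r_ge0 u_vge i))).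
apply: (vgt_sum Hv) => j _; apply: (vgtM0l Hv); last exact: t_gt.
by apply: (frob_emb_vge0 Hv zeta_vge0); case: hbd.
Qed.

Lemma t_coord_eq0 (d ds : 'I_l -> 'I_l -> K) : is_dual_basis v p zeta d ds -> (forall k, u k = 0) ->
  forall j, t ds j = 0.
Proof.
move=> hdd u0 j; apply: (vge_eq0 Hv) => s.
apply: vge_le (ler_norm s) (t_coord_vge hdd (normr_ge0 s) _ j) => k.
by rewrite u0; apply: vge0.
Qed.

Hypothesis l_gt0 : (0 < l)%N.

Lemma adm_eq_ref (d ds : 'I_l -> 'I_l -> K) :
  is_Zp_basis v p zeta d -> is_dual_basis v p zeta d ds ->
  adm_eq v p zeta d (t ds) <-> adm_eq v p zeta cs u.
Proof.
move=> hbd hdd.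
have [k0 _ min_u] := eq_bigmin (Ordinal l_gt0) xpredT (fun k => v (u k)) isT
  (fun k _ => leey (v (u k))).
have hmin k : (v (u k0) <= v (u k))%E by rewrite -min_u bigmin_le.
have u_gt0 : (0 < v (u k0))%E.
  by case: Hchi => _ _ _ _ H; apply/H/Zpl_frob_emb0; case: hbc.
case E: (v (u k0)) u_gt0 => [r | |] // r_gt0.
  rewrite lte_fin in r_gt0; have r_ge0 := ltW r_gt0.
  have u_vge k : vge v (u k) r by rewrite /vge -E hmin.
  rewrite /adm_eq min_u E (bigmin_t_coord hbd hdd r_gt0 u_vge E) -EFinM !frakSE.
  have cs_Zp : forall j k, Zp (cs j k) by case: hdc.
  have lr_lt : l%:R * r < l%:R * r + r by rewrite ltrDl.
  apply: (val_eq_iff_close Hv lr_lt _ _ (vge_prodB Hv r_ge0 _ _ _)).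
  - apply: (vge_prod Hv) => i.
    by apply: frakS_factor_vge (t_coord_vge hdd r_ge0 u_vge) => //; case: hbd.
  - by apply: (vge_prod Hv) => i; apply: frakS_factor_vge u_vge.
  - by move=> i; apply: frakS_factor_vge (t_coord_vge hdd r_ge0 u_vge) => //; case: hbd.
  - by move=> i; apply: frakS_factor_vge u_vge.
  - by move=> i; apply: frakS_factor_approx.
have u0 k : u k = 0 by apply: (val_eqy Hv); apply/eqP; rewrite eq_le leey -E hmin.
by split=> _; apply: (adm_eq_zero p zeta _ Hv l_gt0) => //; exact: t_coord_eq0 hdd u0.
Qed.

End Invariance.

Unset Implicit Arguments.

Theorem mainTheorem6 (R : realType) (K : closedFieldType) (v : K -> \bar R)
  (p a l : nat) (zeta : K) (chi : K -> K)
  (c cs c' cs' : 'I_l -> 'I_l -> K) :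
  prime p -> (0 < l)%N -> (0 < a)%N -> (l %| a)%N ->
  is_valuation v -> val_complete v ->
  v ((p%:R : K) ^+ a) = 1%:E ->
  (p ^ l)%N.-1.-primitive_root zeta ->
  good_character v p l zeta chi ->
  is_Zp_basis v p zeta c -> is_dual_basis v p zeta c cs ->
  is_Zp_basis v p zeta c' -> is_dual_basis v p zeta c' cs' ->
  (adm_eq v p zeta c (t_coord p zeta chi cs) <->
   adm_eq v p zeta c' (t_coord p zeta chi cs')).
Proof.
move=> p_prime l_gt0 _ _ Hv _ val_pa zeta_prim Hchi hbc hdc hbc' hdc'.
have zeta_period := prim_expr_order zeta_prim.
have zeta_vge0 : vge v zeta 0.
  by rewrite /vge (val_unity_root Hv (prim_order_gt0 zeta_prim) zeta_period).
have [B [B_Zp B_inv]] := Zp_basis_inverse Hv hbc.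
have ref := adm_eq_ref Hv p_prime val_pa zeta_period zeta_vge0 Hchi hbc hdc B_Zp B_inv l_gt0.
exact: iff_trans (ref _ _ hbc hdc) (iff_sym (ref _ _ hbc' hdc')).
Qed.
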